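(* Let $A$ be a commutative algebra over a field with multiplication $\star$ satisfying the Tortken identity $$(a\star b)\star(c\star d)-(a\star d)\star(c\star b)=(a,b,c)\star d-(a,d,c)\star b\quad\text{for all }a,b,c,d\in A.$$ Then for all $a,b,c,x\in A$: $(a,b\star x,c)+(b,c\star x,a)+(c,a\star x,b)=0$.
   Context: The associator is $(a,b,c)=a\star(b\star c)-(a\star b)\star c$. *)

From mathcomp Require Import all_boot all_algebra.
Set Implicit Arguments. Unset Strict Implicit. Unset Printing Implicit Defensive.
Import GRing.Theory.
Local Open Scope ring_scope.

Definition bilinear_mul (K : fieldType) (V : lmodType K) (m : V -> V -> V) :=
  (forall k a b c, m (k *: a + b) c = k *: m a c + m b c) /\
  (forall k a b c, m a (k *: b + c) = k *: m a b + m a c).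

Definition commutative_mul (V : Type) (m : V -> V -> V) := forall a b, m a b = m b a.

Definition assoc (V : zmodType) (m : V -> V -> V) (a b c : V) : V :=
  m a (m b c) - m (m a b) c.

Definition tortken (V : zmodType) (m : V -> V -> V) :=
  forall a b c d,
    m (m a b) (m c d) - m (m a d) (m c b) = m (assoc m a b c) d - m (assoc m a d c) b.

From mathcomp Require Import all_boot all_algebra.
Import GRing.Theory.
Local Open Scope ring_scope.

(* Modulo commutativity, the cyclic sum (a, bx, c) + (b, cx, a) + (c, ax, b)
   is a rearrangement of (a,x,c)b - (a,x,b)c - (b,x,c)a.  Subtracting the
   Tortken identities for (a,c,b,x) and (b,a,c,x) from the one for (a,b,c,x),
   the products of products cancel by commutativity and what is left is
   ((a,b,c) - (a,c,b) - (b,a,c))x - ((a,x,c)b - (a,x,b)c - (b,x,c)a) = 0.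
   In a commutative algebra the associator is antisymmetric in its outer
   arguments and its cyclic sum vanishes, so the first term is 0. *)

Lemma subrACA (V : zmodType) (x y z t : V) : (x - y) - (z - t) = (x - z) - (y - t).
Proof. by rewrite !opprB !addrA [RHS](ACl (1*4*3*2)). Qed.

Lemma subrACA3 (V : zmodType) (p1 p2 p3 q1 q2 q3 : V) :
  (p1 - q1) - (p2 - q2) - (p3 - q3) = (p1 - p2 - p3) - (q1 - q2 - q3).
Proof. by rewrite [_ - (p2 - q2)]subrACA subrACA. Qed.

Lemma bilinear_mulBl {K : fieldType} {V : lmodType K} {m : V -> V -> V} :
  bilinear_mul m -> forall u v w, m (u - v) w = m u w - m v w.
Proof. by move=> [mulDl _] u v w; rewrite addrC -scaleN1r mulDl scaleN1r addrC. Qed.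

Section CommutativeAlgebra.

Context {V : zmodType} {m : V -> V -> V}.
Hypothesis mulC : commutative_mul m.
Hypothesis mulBl : forall u v w, m (u - v) w = m u w - m v w.

Local Infix "⋆" := m (at level 40, left associativity).

Lemma mul0l w : 0 ⋆ w = 0.
Proof. by rewrite -[0 in LHS](subrr 0) mulBl subrr. Qed.

Lemma assoc_rev a b c : assoc m c b a = - assoc m a b c.
Proof. by rewrite /assoc opprB [c ⋆ (b ⋆ a)]mulC [(c ⋆ b) ⋆ a]mulC [b ⋆ a]mulC [c ⋆ b]mulC. Qed.

Lemma assoc_cyclic_sum a b c : assoc m a b c + assoc m b c a + assoc m c a b = 0.
Proof.
rewrite /assoc [(b ⋆ c) ⋆ a]mulC [c ⋆ (a ⋆ b)]mulC [(c ⋆ a) ⋆ b]mulC.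
by rewrite [_ - (a ⋆ b) ⋆ c + _]addrC !subrKA subrr.
Qed.

Lemma assoc_sub_perm a b c : assoc m a b c - assoc m a c b - assoc m b a c = 0.
Proof. by rewrite (assoc_rev b c a) (assoc_rev c a b) !opprK assoc_cyclic_sum. Qed.

Lemma assoc_mid_mul_cycle a b c x :
  assoc m a (b ⋆ x) c + assoc m b (c ⋆ x) a + assoc m c (a ⋆ x) b
  = assoc m a x c ⋆ b - assoc m a x b ⋆ c - assoc m b x c ⋆ a.
Proof.
rewrite /assoc !mulBl ![x ⋆ _]mulC [(a ⋆ x) ⋆ c]mulC [((a ⋆ x) ⋆ b) ⋆ c]mulC.
rewrite [((b ⋆ x) ⋆ c) ⋆ a]mulC [(a ⋆ (c ⋆ x)) ⋆ b]mulC [a ⋆ (c ⋆ x)]mulC.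
by rewrite !opprB !addrA [RHS](ACl (5*4*1*6*3*2)).
Qed.

Hypothesis htk : tortken m.

Lemma tortken_assoc_mid a b c x :
  assoc m a x c ⋆ b - assoc m a x b ⋆ c - assoc m b x c ⋆ a = 0.
Proof.
have tortkenE d e f :
    assoc m d x f ⋆ e = assoc m d e f ⋆ x - ((d ⋆ e) ⋆ (f ⋆ x) - (d ⋆ x) ⋆ (f ⋆ e)).
  by rewrite htk subKr.
rewrite !tortkenE subrACA3 -!mulBl assoc_sub_perm mul0l sub0r.
rewrite [c ⋆ b]mulC [b ⋆ a]mulC [(b ⋆ x) ⋆ _]mulC [c ⋆ a]mulC.
by rewrite [_ - (_ - (a ⋆ x) ⋆ (b ⋆ c))]subrACA subrr subr0 subrr oppr0.
Qed.

End CommutativeAlgebra.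

Theorem mainTheorem5 (K : fieldType) (V : lmodType K) (m : V -> V -> V)
  (hbil : bilinear_mul m) (hcomm : commutative_mul m) (htk : tortken m) :
  forall a b c x : V,
    assoc m a (m b x) c + assoc m b (m c x) a + assoc m c (m a x) b = 0.
Proof.
move=> a b c x; have mulBl := bilinear_mulBl hbil.
by rewrite (assoc_mid_mul_cycle hcomm mulBl) (tortken_assoc_mid hcomm mulBl htk).
Qed.
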